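(* Let $G$ be a graph such that either $G$ has more than one connected component containing an edge, or $G$ has a connected component containing at least three vertices. Then $\mathcal{Z}^{\mathrm{TE}}_+(G)$ is not isomorphic to any tree.
   Context: PSD forcing: vertices are colored blue or white; if $B$ is the current set of blue vertices, $C$ a connected component of $G-B$, and $u$ a blue vertex with $N_G(u)\cap V(C)=\{v\}$, then $u$ may force $v$ to become blue. A PSD forcing set is a set of initially blue vertices from which repeated application of this rule turns every vertex blue; $\mathrm{Z}_+(G)$ is the minimum size of a PSD forcing set. $\mathcal{Z}^{\mathrm{TE}}_+(G)$ has as vertices the minimum PSD forcing sets of $G$, with $S_1S_2$ an edge iff $S_1\setminus S_2=\{v_1\}$ and $S_2\setminus S_1=\{v_2\}$ for some vertices $v_1,v_2$. *)

From mathcomp Require Import all_boot.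
Set Implicit Arguments. Unset Strict Implicit. Unset Printing Implicit Defensive.

(* A finite simple graph: vertex type T : finType, adjacency e : rel T,
   assumed symmetric and irreflexive (hypotheses of the theorem). *)

Section PSD.
Variables (T : finType) (e : rel T).

Definition rel_avoid (B : {set T}) : rel T :=
  fun x y => [&& e x y, x \notin B & y \notin B].

Definition same_comp_avoid (B : {set T}) (v w : T) : bool :=
  [&& v \notin B, w \notin B & connect (rel_avoid B) v w].

Definition psd_force (B : {set T}) (u v : T) : Prop :=
  [/\ u \in B, v \notin B, e u v &
      forall w, same_comp_avoid B v w -> e u w -> w = v].

Inductive psd_reach (S : {set T}) : {set T} -> Prop :=
| psd_reach_refl : psd_reach S S
| psd_reach_step B u v : psd_reach S B -> psd_force B u v -> psd_reach S (v |: B).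

Definition psd_forcing_set (S : {set T}) : Prop := psd_reach S [set: T].

Definition min_psd_forcing_set (S : {set T}) : Prop :=
  psd_forcing_set S /\ forall S', psd_forcing_set S' -> #|S| <= #|S'|.

Definition te_adj : rel {set T} :=
  fun S1 S2 => [exists v1, exists v2, (S1 :\: S2 == [set v1]) && (S2 :\: S1 == [set v2])].

End PSD.

(* A (finite) graph given by a vertex predicate V on a type U and an
   adjacency relation e (only edges between vertices of V are relevant). *)
Section Tree.
Variables (U : eqType) (V : U -> Prop) (e : rel U).

Definition graph_connected : Prop :=
  forall x y, V x -> V y ->
    exists p : seq U, [/\ path e x p, last x p = y & forall z, z \in p -> V z].

Definition graph_has_cycle : Prop :=
  exists p : seq U, [/\ uniq p, 3 <= size p, cycle e p & forall z, z \in p -> V z].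

Definition is_tree : Prop :=
  (exists x, V x) /\ graph_connected /\ ~ graph_has_cycle.

End Tree.

Definition TE_is_tree (T : finType) (e : rel T) : Prop :=
  is_tree (min_psd_forcing_set e) (@te_adj T).

From mathcomp Require Import all_boot.
From Stdlib Require Import Classical.

(* If u forces v from a minimum PSD forcing set S, then v forces u back from
   S - u + v, which is therefore again a minimum PSD forcing set, adjacent to S
   in Z^TE_+(G).  Forces in two different components of G commute and span a
   4-cycle.  Inside a component with at least three vertices, exchanging along
   a force strictly shrinks the white component of the next force target, so
   some minimum set S has a force u -> v with v isolated in G - S.  A second
   neighbour of v then gives a triangle; otherwise u has a second neighbour,
   minimality leaves a white vertex besides v, and a force into its white
   component yields a triangle or a 4-cycle. *)

Section PSDForcing.
Set Implicit Arguments. Unset Strict Implicit. Unset Printing Implicit Defensive.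

Variables (T : finType) (e : rel T).
Hypotheses (e_sym : symmetric e) (e_irr : irreflexive e).

Lemma connect_ind (r : rel T) (P : T -> Prop) x y :
  P x -> (forall a b, connect r x a -> P a -> r a b -> P b) -> connect r x y -> P y.
Proof.
move=> Px step /connectP[p rp ->]; elim/last_ind: p rp => //= p b IH.
rewrite rcons_path last_rcons => /andP[rp rab].
by apply: step (IH rp) rab; apply/connectP; exists p.
Qed.

Lemma rel_avoid_sym (B : {set T}) : symmetric (rel_avoid e B).
Proof. by move=> x y; rewrite /rel_avoid e_sym [(x \notin B) && _]andbC. Qed.

Lemma same_comp_avoid_refl (B : {set T}) v : v \notin B -> same_comp_avoid e B v v.
Proof. by move=> vB; rewrite /same_comp_avoid vB connect0. Qed.

Lemma same_comp_avoid_edge (B : {set T}) x y :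
  x \notin B -> y \notin B -> e x y -> same_comp_avoid e B x y.
Proof.
by move=> xB yB exy; rewrite /same_comp_avoid xB yB connect1 // /rel_avoid exy xB.
Qed.

Lemma same_comp_avoid_sym (B : {set T}) : symmetric (same_comp_avoid e B).
Proof.
move=> x y; rewrite /same_comp_avoid (sym_connect_sym (@rel_avoid_sym B)).
by rewrite andbCA.
Qed.

Lemma same_comp_avoid_trans (B : {set T}) : transitive (same_comp_avoid e B).
Proof.
move=> y x z /and3P[xB _ cxy] /and3P[_ zB cyz].
by rewrite /same_comp_avoid xB zB (connect_trans cxy cyz).
Qed.

Lemma same_comp_avoid_connect (B : {set T}) x y : same_comp_avoid e B x y -> connect e x y.
Proof.
case/and3P=> _ _; apply: connect_sub => a b /and3P[eab _ _]; exact: connect1.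
Qed.

Lemma same_comp_avoid_isolated (B : {set T}) v w :
  (forall c, e v c -> c \in B) -> same_comp_avoid e B v w -> w = v.
Proof.
move=> nbB /and3P[_ _]; apply: (connect_ind (P := eq^~ v)) => // a b _ -> /and3P[evb _].
by rewrite nbB.
Qed.

Lemma same_comp_avoid_transfer (B B' : {set T}) v w :
  (forall a, same_comp_avoid e B' v a -> a \notin B) ->
  same_comp_avoid e B' v w -> same_comp_avoid e B v w.
Proof.
move=> compB vw; have /and3P[vB' _ cvw] := vw.
have vB : v \notin B by apply/compB/same_comp_avoid_refl.
apply: (connect_ind (P := same_comp_avoid e B v)) cvw; first exact: same_comp_avoid_refl.
move=> a b cva vaB /and3P[eab aB' bB']; apply: (same_comp_avoid_trans vaB).
apply: same_comp_avoid_edge => //; first by case/and3P: vaB.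
apply: compB; rewrite /same_comp_avoid vB' bB' /=.
by apply: connect_trans cva (connect1 _); rewrite /rel_avoid eab aB'.
Qed.

Lemma psd_force_isolated (B : {set T}) u v :
  u \in B -> v \notin B -> e u v -> (forall c, e v c -> c \in B) -> psd_force e B u v.
Proof. by move=> uB vB euv nbB; split=> // w /(same_comp_avoid_isolated nbB). Qed.

Lemma psd_force_transfer (B B' : {set T}) u v :
  psd_force e B u v -> u \in B' -> v \notin B' ->
  (forall w, same_comp_avoid e B' v w -> w \notin B) -> psd_force e B' u v.
Proof.
case=> _ _ euv uniq uB' vB' compB; split=> // w.
by move/(same_comp_avoid_transfer compB); apply: uniq.
Qed.

Lemma psd_reach_trans (S B C : {set T}) :
  psd_reach e S B -> psd_reach e B C -> psd_reach e S C.
Proof. by move=> reachB; elim=> // C' u v _ IH; apply: psd_reach_step. Qed.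

Lemma psd_reach_setU (S S' B : {set T}) :
  psd_reach e S B -> S \subset S' -> psd_reach e S' (B :|: S').
Proof.
move=> reachB sSS'; elim: reachB => [|B' u v _ IH f].
  by rewrite (setUidPr sSS'); apply: psd_reach_refl.
rewrite -setUA; case: (boolP (v \in S')) => vS'.
  by rewrite (setUidPr _) // sub1set inE vS' orbT.
have [uB vB _ _] := f; apply: psd_reach_step IH _.
apply: (psd_force_transfer f) => [|| w /and3P[_]]; rewrite !inE ?uB ?negb_or ?vB //.
by case/andP.
Qed.

Lemma psd_forcing_set_superset (S S' : {set T}) :
  psd_forcing_set e S -> S \subset S' -> psd_forcing_set e S'.
Proof. by move=> fS sSS'; have := psd_reach_setU fS sSS'; rewrite setTU. Qed.

Lemma psd_forcing_set_force (B : {set T}) u v :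
  psd_force e B u v -> psd_forcing_set e (v |: B) -> psd_forcing_set e B.
Proof.
by move=> f; apply: psd_reach_trans; apply: psd_reach_step f; apply: psd_reach_refl.
Qed.

Lemma psd_reach_avoid_comp (S B : {set T}) d :
  psd_reach e S B -> (forall y x, psd_force e S y x -> ~ same_comp_avoid e S d x) ->
  forall w, same_comp_avoid e S d w -> w \notin B.
Proof.
move=> reachB noforce; elim: reachB => [|B' u v _ IH f] w dw; first by case/and3P: dw.
rewrite in_setU1 negb_or IH // andbT; apply/eqP => wv; subst w.
have [uB vB euv _] := f; have vS : v \notin S by case/and3P: dw.
have uS : u \in S.
  apply: contraLR uB => uS; apply: IH; apply: same_comp_avoid_trans dw _.
  by apply: same_comp_avoid_edge; rewrite // e_sym.
apply: (noforce u v) (dw); apply: psd_force_transfer f uS vS _ => w vw.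
by apply: IH; apply: same_comp_avoid_trans dw vw.
Qed.

Lemma exists_psd_force_into_comp (S : {set T}) d :
  psd_forcing_set e S -> d \notin S ->
  exists y x, psd_force e S y x /\ same_comp_avoid e S d x.
Proof.
move=> fS dS; apply: NNPP => noforce.
have noforce' y x : psd_force e S y x -> ~ same_comp_avoid e S d x.
  by move=> f dx; apply: noforce; exists y, x.
by have := psd_reach_avoid_comp fS noforce' (same_comp_avoid_refl dS); rewrite in_setT.
Qed.

Lemma exists_min_psd_forcing_set : exists S, min_psd_forcing_set e S.
Proof.
apply: NNPP => nomin.
suff noforcing n (S : {set T}) : #|S| <= n -> ~ psd_forcing_set e S.
  exact: noforcing _ (leqnn _) (psd_reach_refl _ _).
elim: n S => [|n IH] S leSn fS; apply: nomin; exists S; split=> // S' fS'.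
  exact: leq_trans leSn _.
by rewrite leqNgt; apply/negP => ltS'S; apply: IH fS'; rewrite -ltnS (leq_trans ltS'S).
Qed.

Definition exchange (S : {set T}) u v := v |: (S :\ u).

Lemma in_exchange (S : {set T}) u v z :
  (z \in exchange S u v) = (z == v) || (z != u) && (z \in S).
Proof. by rewrite !inE. Qed.

Lemma exchange_trans (S : {set T}) a c d :
  c \notin S -> exchange (exchange S a c) c d = exchange S a d.
Proof. by move=> cS; rewrite /exchange setU1K // !inE negb_and cS orbT. Qed.

Lemma exchange_retarget (S : {set T}) a b c :
  a \in S -> a != b -> b != c -> exchange (exchange S a c) b a = exchange S b c.
Proof.
move=> aS ab bc; apply/setP => z; rewrite !(in_exchange, inE).
have [->|za] := eqVneq z a; first by rewrite ab aS orbT.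
by have [->|zc] := eqVneq z c; rewrite //= eq_sym bc.
Qed.

Lemma exchangeC (S : {set T}) a b c d :
  a != d -> b != c -> exchange (exchange S a c) b d = exchange (exchange S b d) a c.
Proof.
move=> ad bc; apply/setP => z; rewrite !(in_exchange, inE).
have [->|zc] := eqVneq z c; first by rewrite /= [c == b]eq_sym (negbTE bc) orbT.
have [->|zd] := eqVneq z d; first by rewrite /= eq_sym ad.
by rewrite /= andbCA.
Qed.

Lemma psd_force_exchange (S : {set T}) u v :
  psd_force e S u v -> psd_force e (exchange S u v) v u.
Proof.
case=> uS vS euv uniq; have uv : u != v by apply: contraNneq vS => <-.
set S' := exchange S u v.
have outS' a : a \notin S' -> a != u -> (a \notin S) && (a != v).
  rewrite in_exchange negb_or negb_and negbK.
  by case/andP=> -> /orP[/eqP->|->]; rewrite ?eqxx.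
(* Entering the white component of v in G - S from u would give u a second
   neighbour in that component. *)
have compS' a : same_comp_avoid e S' u a -> a = u \/ ~~ same_comp_avoid e S v a.
  case/and3P=> _ _; apply: (connect_ind (P := fun a => a = u \/ ~~ same_comp_avoid e S v a)).
    by left.
  move=> {}a b _ Pa /and3P[eab aS' bS']; case: (eqVneq b u) => [->|bu]; [by left | right].
  have /andP[bS bv] := outS' b bS' bu; apply: contra bv => vb.
  case: (eqVneq a u) => [au | au]; first by rewrite -au in uniq; rewrite (uniq _ vb eab).
  have nva : ~~ same_comp_avoid e S v a by case: Pa au => [->|//]; rewrite eqxx.
  have /andP[aS _] := outS' a aS' au.
  case/negP: nva; apply: same_comp_avoid_trans vb (same_comp_avoid_edge bS aS _).
  by rewrite e_sym.
split; [by rewrite in_exchange eqxx | by rewrite in_exchange eqxx (negbTE uv) | by rewrite e_sym |].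
move=> w uw evw; case: (eqVneq w u) => [-> // | wu].
have /andP[wS _] : (w \notin S) && (w != v) by apply: outS' wu; case/and3P: uw.
by case: (compS' w uw) => // /negP[]; apply: same_comp_avoid_edge.
Qed.

Lemma card_exchange (S : {set T}) u v :
  u \in S -> v \notin S -> #|exchange S u v| = #|S|.
Proof.
move=> uS vS; rewrite cardsU1 (cardsD1 u S) uS !inE negb_and negbK vS orbT.
by rewrite add1n.
Qed.

Lemma psd_forcing_set_exchange (S : {set T}) u v :
  psd_forcing_set e S -> psd_force e S u v -> psd_forcing_set e (exchange S u v).
Proof.
move=> fS f; apply: psd_forcing_set_force (psd_force_exchange f) _.
apply: psd_forcing_set_superset fS _; apply/subsetP => z zS.
by rewrite !(in_exchange, inE) zS andbT orbCA orbN orbT.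
Qed.

Lemma min_psd_forcing_set_exchange (S : {set T}) u v :
  min_psd_forcing_set e S -> psd_force e S u v -> min_psd_forcing_set e (exchange S u v).
Proof.
case=> fS minS f; have [uS vS _ _] := f.
by split; [apply: psd_forcing_set_exchange | rewrite card_exchange].
Qed.

Lemma te_adj_sym : symmetric (@te_adj T).
Proof.
suff adj_sym (A B : {set T}) : te_adj A B -> te_adj B A.
  by move=> A B; apply/idP/idP; apply: adj_sym.
rewrite /te_adj => /existsP[a /existsP[b /andP[AB BA]]].
by apply/existsP; exists b; apply/existsP; exists a; rewrite AB BA.
Qed.

Lemma te_adj_neq (A B : {set T}) : te_adj A B -> A != B.
Proof.
rewrite /te_adj => /existsP[a /existsP[b /andP[/eqP AB _]]]; apply/eqP => eqAB.
by move: AB; rewrite eqAB setDv => /setP/(_ a); rewrite !inE eqxx.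
Qed.

Lemma te_adj_exchange (S : {set T}) u v : u \in S -> v \notin S -> te_adj S (exchange S u v).
Proof.
move=> uS vS; have uv : u != v by apply: contraNneq vS => <-.
apply/existsP; exists u; apply/existsP; exists v.
apply/andP; split; apply/eqP/setP => z; rewrite !(in_exchange, inE).
  have [->|zu] := eqVneq z u; first by rewrite (negbTE uv) uS.
  by case: (z \in S); rewrite ?orbT ?andbF.
have [->|zv] := eqVneq z v; first by rewrite vS.
by case: (z \in S); rewrite ?andbF.
Qed.

Local Notation TE_has_cycle := (graph_has_cycle (min_psd_forcing_set e) (@te_adj T)).

Lemma TE_cycle3 A B C :
  min_psd_forcing_set e A -> min_psd_forcing_set e B -> min_psd_forcing_set e C ->
  te_adj A B -> te_adj B C -> te_adj C A -> TE_has_cycle.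
Proof.
move=> mA mB mC AB BC CA; exists [:: A; B; C]; split=> //=.
- rewrite !inE negb_or (te_adj_neq AB) (te_adj_neq BC).
  by rewrite [A == C]eq_sym (te_adj_neq CA).
- by rewrite AB BC CA.
- by move=> S; rewrite !inE => /or3P[] /eqP->.
Qed.

Lemma TE_cycle4 A B C D :
  min_psd_forcing_set e A -> min_psd_forcing_set e B ->
  min_psd_forcing_set e C -> min_psd_forcing_set e D ->
  te_adj A B -> te_adj B C -> te_adj C D -> te_adj D A -> A != C -> B != D -> TE_has_cycle.
Proof.
move=> mA mB mC mD AB BC CD DA AC BD; exists [:: A; B; C; D]; split=> //=.
- rewrite !inE !negb_or (te_adj_neq AB) (te_adj_neq BC) (te_adj_neq CD) AC BD.
  by rewrite [A == D]eq_sym (te_adj_neq DA).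
- by rewrite AB BC CD DA.
- by move=> S; rewrite !inE => /or4P[] /eqP->.
Qed.

Lemma TE_cycle_common_source (S : {set T}) a c d :
  min_psd_forcing_set e S -> psd_force e S a c -> psd_force e S a d -> c != d ->
  TE_has_cycle.
Proof.
move=> minS fc fd cd; have [aS cS _ _] := fc; have [_ dS _ _] := fd.
apply: (TE_cycle3 minS (min_psd_forcing_set_exchange minS fc)
                       (min_psd_forcing_set_exchange minS fd)).
- exact: te_adj_exchange.
- rewrite -(exchange_trans a d cS); apply: te_adj_exchange; first exact: setU11.
  by rewrite !(in_exchange, inE) negb_or negb_and negbK dS orbT eq_sym cd.
- by rewrite te_adj_sym; apply: te_adj_exchange.
Qed.

Lemma TE_cycle_common_target (S : {set T}) a b c :
  min_psd_forcing_set e S -> psd_force e S a c -> psd_force e S b c -> a != b ->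
  TE_has_cycle.
Proof.
move=> minS fa fb ab; have [aS cS _ _] := fa; have [bS _ _ _] := fb.
have [ac bc] : a != c /\ b != c by split; apply: contraNneq cS => <-.
apply: (TE_cycle3 minS (min_psd_forcing_set_exchange minS fa)
                       (min_psd_forcing_set_exchange minS fb)).
- exact: te_adj_exchange.
- rewrite -(exchange_retarget aS ab bc); apply: te_adj_exchange.
    by rewrite !(in_exchange, inE) [b == a]eq_sym ab bS orbT.
  by rewrite !(in_exchange, inE) eqxx (negbTE ac).
- by rewrite te_adj_sym; apply: te_adj_exchange.
Qed.

Lemma TE_cycle_square (S : {set T}) a b c d :
  min_psd_forcing_set e S -> psd_force e S a c -> psd_force e S b d ->
  psd_force e (exchange S a c) b d -> a != b -> c != d -> TE_has_cycle.
Proof.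
move=> minS fac fbd fbd' ab cd; have [aS cS _ _] := fac; have [bS dS _ _] := fbd.
have [bA dA _ _] := fbd'.
have [ad bc] : a != d /\ b != c.
  by split; [apply: contraNneq dS => <- | apply: contraNneq cS => <-].
have minA := min_psd_forcing_set_exchange minS fac.
apply: (TE_cycle4 minS minA (min_psd_forcing_set_exchange minA fbd')
                  (min_psd_forcing_set_exchange minS fbd)).
- exact: te_adj_exchange.
- exact: te_adj_exchange.
- rewrite exchangeC // te_adj_sym; apply: te_adj_exchange.
    by rewrite !(in_exchange, inE) (negbTE ad) ab aS.
  by rewrite !(in_exchange, inE) negb_or negb_and negbK cS cd orbT.
- by rewrite te_adj_sym; apply: te_adj_exchange.
- apply/eqP => /setP/(_ c).
  by rewrite !(in_exchange, inE) eqxx (negbTE cS) (negbTE cd) [c == b]eq_sym (negbTE bc).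
- apply/eqP => /setP/(_ c).
  by rewrite !(in_exchange, inE) eqxx (negbTE cd) (negbTE cS); case: (c != b).
Qed.

Lemma same_comp_avoid_exchange (S : {set T}) u v x w :
  psd_force e S u v -> same_comp_avoid e S v x -> x != v ->
  same_comp_avoid e (exchange S u v) x w -> same_comp_avoid e S v w && (w != v).
Proof.
case=> _ vS _ uniq vx xv /and3P[_ _].
apply: (connect_ind (P := fun a => same_comp_avoid e S v a && (a != v))); first exact/andP.
move=> a b _ /andP[va av] /and3P[eab _]; rewrite !(in_exchange, inE) negb_or negb_and negbK.
case/andP=> bv /orP[/eqP bu | bS]; last first.
  have aS : a \notin S by case/and3P: va.
  by rewrite bv andbT; apply: same_comp_avoid_trans va (same_comp_avoid_edge aS bS eab).
by rewrite bu e_sym in eab; rewrite (uniq _ va eab) eqxx in av.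
Qed.

Lemma exists_psd_force_isolated (S : {set T}) u v :
  min_psd_forcing_set e S -> psd_force e S u v ->
  exists S' u' v', [/\ min_psd_forcing_set e S', psd_force e S' u' v', connect e v v'
                     & forall c, e v' c -> c \in S'].
Proof.
have [n] := ubnP #|[set a | same_comp_avoid e S v a]|.
elim: n S u v => // n IH S u v compS minS f; have [_ vS _ _] := f.
case: (pickP [pred x | same_comp_avoid e S v x & x != v]) => [x /andP[vx xv] | isolated].
  have minS' := min_psd_forcing_set_exchange minS f.
  have xS' : x \notin exchange S u v.
    rewrite in_exchange negb_or negb_and negbK xv.
    by case/and3P: vx => _ -> _; rewrite orbT.
  have [y [x' [f' xx']]] := exists_psd_force_into_comp minS'.1 xS'.
  have sub : [set a | same_comp_avoid e (exchange S u v) x' a]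
               \subset [set a | same_comp_avoid e S v a] :\ v.
    apply/subsetP => a; rewrite !(in_exchange, inE) => x'a; rewrite andbC.
    exact: same_comp_avoid_exchange f vx xv (same_comp_avoid_trans xx' x'a).
  have lt_comp : #|[set a | same_comp_avoid e (exchange S u v) x' a]| < n.
    rewrite -ltnS (leq_trans _ compS) // ltnS (leq_ltn_trans (subset_leq_card sub)) //.
    by rewrite [X in _ < X](cardsD1 v) inE same_comp_avoid_refl.
  have [S'' [u'' [v'' [minS'' f'' vv'' nbS'']]]] := IH _ _ _ lt_comp minS' f'.
  exists S'', u'', v''; split=> //.
  apply: connect_trans (same_comp_avoid_connect vx) _.
  exact: connect_trans (same_comp_avoid_connect xx') vv''.
exists S, u, v; split=> // c evc; apply: contraT => cS.
have cv : c != v by apply: contraTneq evc => ->; rewrite e_irr.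
have vc : same_comp_avoid e S v c := same_comp_avoid_edge vS cS evc.
by have := isolated c; rewrite /= vc cv.
Qed.

Lemma exists_psd_force_near_edge (S : {set T}) a b :
  min_psd_forcing_set e S -> e a b -> exists y x, psd_force e S y x /\ connect e a x.
Proof.
case=> fS minS eab.
case: (pickP [pred d | connect e a d & d \notin S]) => [d /andP[ad dS] | inS].
  have [y [x [f dx]]] := exists_psd_force_into_comp fS dS.
  by exists y, x; split=> //; apply: connect_trans ad (same_comp_avoid_connect dx).
have {}inS d : connect e a d -> d \in S.
  by move=> ad; have := inS d; rewrite /= ad => /negbFE.
have ab : a != b by apply: contraTneq eab => ->; rewrite e_irr.
have bS : b \in S := inS b (connect1 eab).
have f : psd_force e (S :\ b) a b.
  apply: psd_force_isolated => //; rewrite ?inE ?eqxx // ?ab ?inS // => c ebc.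
  rewrite !inE inS ?andbT; last exact: connect_trans (connect1 eab) (connect1 ebc).
  by apply: contraTneq ebc => ->; rewrite e_irr.
have fSb : psd_forcing_set e (b |: (S :\ b)) by rewrite setD1K.
have := minS _ (psd_forcing_set_force f fSb).
by rewrite (cardsD1 b S) bS add1n ltnn.
Qed.

Lemma exists_white_besides_leaf (S : {set T}) u v w :
  min_psd_forcing_set e S -> psd_force e S u v -> (forall c, e v c -> c = u) ->
  e u w -> w != v -> exists2 d, d \notin S & d != v.
Proof.
case=> _ minS f leaf euw wv; have [uS vS euv _] := f.
case: (pickP [pred d | (d \notin S) && (d != v)]) => [d /andP[dS dv] | inS]; first by exists d.
have {}inS z : z != v -> z \in S.
  by move=> zv; have := inS z; rewrite /= zv andbT => /negbFE.
have uv : u != v by apply: contraNneq vS => <-.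
have uw : u != w by apply: contraTneq euw => ->; rewrite e_irr.
set B := [set: T] :\ v :\ w.
have fv : psd_force e B u v.
  apply: psd_force_isolated euv _ => [||c /leaf ->];
    by rewrite !inE ?eqxx ?andbF ?uv ?uw ?orbT.
have fw : psd_force e (v |: B) u w.
  apply: psd_force_isolated euw _ => [||c ewc];
    rewrite !inE ?eqxx ?(negbTE wv) ?uv ?uw ?orbT //.
  have cw : c != w by apply: contraTneq ewc => ->; rewrite e_irr.
  by rewrite cw andbT orbN.
have fB : psd_forcing_set e B.
  apply: psd_forcing_set_force fv (psd_forcing_set_force fw _).
  rewrite (_ : w |: (v |: B) = [set: T]); first exact: psd_reach_refl.
  by apply/setP => z; rewrite !inE; case: (z == w); case: (z == v).
suff : #|B| < #|S| by rewrite ltnNge minS.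
apply: proper_card; apply/properP; split.
  by apply/subsetP => z; rewrite !inE => /and3P[_ zv _]; apply: inS.
by exists w; [apply: inS | rewrite !inE eqxx].
Qed.

Lemma TE_cycle_at_leaf (S : {set T}) u v w :
  min_psd_forcing_set e S -> psd_force e S u v -> (forall c, e v c -> c = u) ->
  e u w -> w != v -> TE_has_cycle.
Proof.
move=> minS f leaf euw wv; have [uS vS euv _] := f.
have [d dS dv] := exists_white_besides_leaf minS f leaf euw wv.
have [y [x [fyx dx]]] := exists_psd_force_into_comp minS.1 dS.
have nbS c : e v c -> c \in S by move/leaf ->.
have xv : x != v.
  apply: contraNneq dv => xv; rewrite xv same_comp_avoid_sym in dx.
  by rewrite (same_comp_avoid_isolated nbS dx).
have [yu|yu] := eqVneq y u.
  by rewrite yu in fyx; apply: TE_cycle_common_source minS f fyx _; rewrite eq_sym.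
have uX : u \in exchange S y x by rewrite in_exchange [u == y]eq_sym yu uS orbT.
have vX : v \notin exchange S y x.
  by rewrite in_exchange [v == x]eq_sym (negbTE xv) (negbTE vS) andbF.
apply: TE_cycle_square minS fyx f _ yu xv.
by apply: psd_force_isolated (uX) vX euv _ => c /leaf ->.
Qed.

Lemma TE_cycle_isolated (S : {set T}) u v :
  min_psd_forcing_set e S -> psd_force e S u v -> (forall c, e v c -> c \in S) ->
  3 <= #|[set y | connect e v y]| -> TE_has_cycle.
Proof.
move=> minS f nbS big; have [uS vS euv _] := f.
case: (pickP [pred w | e v w & w != u]) => [w /andP[evw wu] | leaf].
  have fw : psd_force e S w v.
    by apply: psd_force_isolated (nbS w evw) vS _ nbS; rewrite e_sym.
  by apply: TE_cycle_common_target minS f fw _; rewrite eq_sym.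
have {}leaf c : e v c -> c = u.
  by move=> evc; apply/eqP; have := leaf c; rewrite /= evc => /negbFE.
case: (pickP [pred w | e u w & w != v]) => [w /andP[euw wv] | uleaf].
  exact: TE_cycle_at_leaf minS f leaf euw wv.
have {}uleaf c : e u c -> c = v.
  by move=> euc; apply/eqP; have := uleaf c; rewrite /= euc => /negbFE.
suff : #|[set y | connect e v y]| <= 2 by rewrite leqNgt big.
apply: leq_trans (subset_leq_card (_ : _ \subset [set u; v])) _; last first.
  by rewrite cards2; case: (u != v).
apply/subsetP => y; rewrite inE; apply: (connect_ind (P := fun y => y \in [set u; v])).
  by rewrite !inE eqxx orbT.
by move=> a b _; rewrite !inE => /orP[] /eqP-> => [/uleaf|/leaf] ->; rewrite eqxx ?orbT.
Qed.

Lemma TE_cycle_separate (S : {set T}) y1 x1 y2 x2 :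
  min_psd_forcing_set e S -> psd_force e S y1 x1 -> psd_force e S y2 x2 ->
  ~~ connect e x1 x2 -> TE_has_cycle.
Proof.
move=> minS f1 f2 nc; have [y1S x1S e1 _] := f1; have [y2S x2S e2 _] := f2.
have far z : connect e x2 z -> (z != x1) && (z != y1).
  move=> x2z; rewrite (sym_connect_sym e_sym) in x2z.
  apply/andP; split; first by apply: contraNneq nc => <-.
  by apply: contraNneq nc => zy1; apply: connect_trans (connect1 _) x2z; rewrite zy1 e_sym.
have /andP[_ y2y1] : (y2 != x1) && (y2 != y1) by apply: far; rewrite connect1 // e_sym.
have /andP[x2x1 _] : (x2 != x1) && (x2 != y1) by apply: far; apply: connect0.
have f2' : psd_force e (exchange S y1 x1) y2 x2.
  apply: psd_force_transfer f2 _ _ _.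
  - by rewrite in_exchange y2y1 y2S orbT.
  - by rewrite in_exchange negb_or x2x1 negb_and x2S orbT.
  move=> w x2w; have /andP[_ wy1] := far w (same_comp_avoid_connect x2w).
  by case/and3P: x2w => _ + _; rewrite in_exchange wy1 negb_or => /andP[].
by apply: TE_cycle_square minS f1 f2 f2' _ _; rewrite eq_sym.
Qed.

End PSDForcing.

Theorem theorem4p8 (T : finType) (e : rel T)
  (e_sym : symmetric e) (e_irr : irreflexive e)
  (H : (exists u1 v1 u2 v2, [/\ e u1 v1, e u2 v2 & ~~ connect e u1 u2])
       \/ (exists x : T, 3 <= #|[set y | connect e x y]|)) :
  ~ TE_is_tree e.
Proof.
case=> _ [_ acyclic]; apply: acyclic.
have [S minS] := exists_min_psd_forcing_set e.
have connect_symE := sym_connect_sym e_sym.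
case: H => [[u1 [v1 [u2 [v2 [e1 e2 nc]]]]] | [x0 big]].
  have [y1 [x1 [f1 u1x1]]] := exists_psd_force_near_edge e_sym e_irr minS e1.
  have [y2 [x2 [f2 u2x2]]] := exists_psd_force_near_edge e_sym e_irr minS e2.
  apply: (TE_cycle_separate e_sym minS f1 f2); apply: contra nc => x1x2.
  by apply: connect_trans u1x1 (connect_trans x1x2 _); rewrite connect_symE.
have [b x0b] : exists b, e x0 b.
  case: (pickP (e x0)) => [b|isolated]; first by exists b.
  suff : [set y | connect e x0 y] \subset [set x0].
    by move/subset_leq_card; rewrite cards1 => /(leq_trans big).
  apply/subsetP => y; rewrite !inE => /connectP[[|c p] /=]; first by move=> _ ->.
  by rewrite isolated.
have [y [x [fyx x0x]]] := exists_psd_force_near_edge e_sym e_irr minS x0b.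
have [S' [u [v [minS' f xv nbS']]]] := exists_psd_force_isolated e_sym e_irr minS fyx.
apply: (TE_cycle_isolated e_sym e_irr minS' f nbS').
have x0v := same_connect connect_symE (connect_trans x0x xv).
suff -> : [set y | connect e v y] = [set y | connect e x0 y] by [].
by apply/setP => z; rewrite !inE x0v.
Qed.
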